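(* Let $d\ge 0$, let $G$ be a countable subgroup of $\mathbb{R}^d$, and let $(H_n)_{n\ge1}$ be a Liouville, symmetric, decreasing sequence of random subsemigroups of $G$ such that for every $n$, $H_n$ spans $\mathbb{R}^d$ as a real vector space. Then almost surely there is no $n$ and no closed half-space $\{x\in\mathbb{R}^d:\langle v,x\rangle\ge 0\}$ ($v\neq 0$) containing $H_n$; i.e. almost surely $H_n$ does not eventually get trapped in a closed half-space.
   Context: Let $\mathfrak{S}(G)$ be the set of subsemigroups of $G$, viewed as a subset of $\{0,1\}^G$ with the product topology. A decreasing sequence $(H_n)$ of $\mathfrak{S}(G)$-valued random variables is Liouville if its tail $\sigma$-algebra $\bigcap_n\sigma(H_n,H_{n+1},\ldots)$ is trivial, and symmetric if for every $n$, $H_n$ and $H_n^{-1}=\{-h:h\in H_n\}$ have the same distribution. *)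

From HB Require Import structures.
From mathcomp Require Import all_boot all_order all_algebra.
From mathcomp Require Import all_classical all_reals all_analysis.
Set Implicit Arguments. Unset Strict Implicit. Unset Printing Implicit Defensive.
Import Order.TTheory GRing.Theory Num.Theory.
Local Open Scope classical_set_scope.
Local Open Scope ring_scope.

Definition dotv (R : realType) (d : nat) (v x : 'rV[R]_d) : R :=
  \sum_(i < d) v ord0 i * x ord0 i.

Definition is_subgroup (R : realType) (d : nat) (G : set 'rV[R]_d) : Prop :=
  G 0 /\ (forall x y, G x -> G y -> G (x - y)).

Definition is_subsemigroup (R : realType) (d : nat) (G H : set 'rV[R]_d) : Prop :=
  H `<=` G /\ (forall x y, H x -> H y -> H (x + y)).

Definition spans_Rd (R : realType) (d : nat) (H : set 'rV[R]_d) : Prop :=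
  exists s : seq 'rV[R]_d, (forall x, x \in s -> H x) /\ (span s = fullv)%VS.

Definition setNeg (R : realType) (d : nat) (H : set 'rV[R]_d) : set 'rV[R]_d :=
  [set - h | h in H].

(* sigma-algebra on subsets of G (= product sigma-algebra on {0,1}^G, which is
   the Borel sigma-algebra of the product topology since G is countable),
   generated by the coordinate events {S | g \in S}, g in G *)
Definition subset_sigma (R : realType) (d : nat) (G : set 'rV[R]_d)
  : set (set (set 'rV[R]_d)) :=
  <<s [set [set S : set 'rV[R]_d | S g] | g in G] >>.

Definition random_subsets (R : realType) (d : nat) (dO : measure_display)
  (Omega : measurableType dO) (G : set 'rV[R]_d)
  (H : nat -> Omega -> set 'rV[R]_d) : Prop :=
  forall n g, G g -> measurable [set w | H n w g].

Definition future_sigma (R : realType) (d : nat) (Omega : Type)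
  (G : set 'rV[R]_d) (H : nat -> Omega -> set 'rV[R]_d) (n : nat)
  : set (set Omega) :=
  <<s [set A | exists m g, (n <= m)%N /\ G g /\ A = [set w | H m w g]] >>.

Definition liouville (R : realType) (d : nat) (dO : measure_display)
  (Omega : measurableType dO) (P : probability Omega R) (G : set 'rV[R]_d)
  (H : nat -> Omega -> set 'rV[R]_d) : Prop :=
  forall A : set Omega, (forall n, future_sigma G H n A) ->
    P A = 0%E \/ P A = 1%E.

Definition symmetric_seq (R : realType) (d : nat) (dO : measure_display)
  (Omega : measurableType dO) (P : probability Omega R) (G : set 'rV[R]_d)
  (H : nat -> Omega -> set 'rV[R]_d) : Prop :=
  forall n (B : set (set 'rV[R]_d)), subset_sigma G B ->
    P ((H n) @^-1` B) = P ((fun w => setNeg (H n w)) @^-1` B).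

Definition decreasing_subsets (R : realType) (d : nat) (Omega : Type)
  (H : nat -> Omega -> set 'rV[R]_d) : Prop :=
  forall n w, H n.+1 w `<=` H n w.

From HB Require Import structures.
From mathcomp Require Import all_boot all_order all_algebra.
From mathcomp Require Import all_classical all_reals all_analysis.
From mathcomp Require Import ring lra.
Import Order.TTheory GRing.Theory Num.Theory.
Import numFieldTopology.Exports numFieldNormedType.Exports.
Set Implicit Arguments. Unset Strict Implicit. Unset Printing Implicit Defensive.
Local Open Scope classical_set_scope.
Local Open Scope ring_scope.

(* For a box B of normal vectors with rational centre and radius 1/(k+1), the
   event "some H_m lies in a half-space {x | <w, x> >= 0} with w in B" is a tail
   event, hence has probability 0 or 1; by symmetry of the H_n it has the same
   probability as for the reflected box -B. So almost surely, for all rational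
   boxes at once, H is eventually trapped with a normal in B iff it is with a
   normal in -B. For such an outcome, the dual cones
   C_m = {w | H_m lies in {<w, .> >= 0}} increase, are convex cones, are pointed
   because H_m spans R^d, and every w in some C_m has -w in the closure of their
   union. Such a union is {0}: finitely many of its elements span it and lie in
   one C_m, their sum is interior to that cone relative to their span, and
   approximating -(sum + v) for v in C_m puts -v in a common C_M, so v = 0. *)

Section DotProduct.
Variables (R : realType) (d : nat).
Implicit Types (v w x y : 'rV[R]_d).

Lemma dotvC v x : dotv v x = dotv x v.
Proof. by rewrite /dotv; apply: eq_bigr => i _; rewrite mulrC. Qed.

Lemma dotvDl v w x : dotv (v + w) x = dotv v x + dotv w x.
Proof. by rewrite /dotv -big_split; apply: eq_bigr => i _; rewrite mxE mulrDl. Qed.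

Lemma dotvZl (a : R) v x : dotv (a *: v) x = a * dotv v x.
Proof. by rewrite /dotv mulr_sumr; apply: eq_bigr => i _; rewrite mxE mulrA. Qed.

Lemma dotvNl v x : dotv (- v) x = - dotv v x.
Proof. by rewrite -scaleN1r dotvZl mulN1r. Qed.

Lemma dotv0l x : dotv 0 x = 0.
Proof. by rewrite -(scale0r 0) dotvZl mul0r. Qed.

Lemma dotv_sumr v n (c : 'I_n -> R) (s : 'I_n -> 'rV[R]_d) :
  dotv v (\sum_i c i *: s i) = \sum_i c i * dotv v (s i).
Proof.
elim/big_rec2: _ => [|i a b _ <-]; first by rewrite dotvC dotv0l.
by rewrite dotvC dotvDl dotvZl !(dotvC _ v).
Qed.

Lemma dotvv_eq0 v : dotv v v = 0 -> v = 0.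
Proof.
move=> /eqP; rewrite psumr_eq0 => [/allP vv0|i _]; last by rewrite -expr2 sqr_ge0.
by apply/rowP => j; rewrite mxE; apply/eqP; have := vv0 j (mem_index_enum _);
  rewrite /= mulf_eq0 orbb.
Qed.

Lemma full_span_orthogonal_eq0 (s : seq 'rV[R]_d) v :
  (span s = fullv)%VS -> (forall x, x \in s -> dotv v x = 0) -> v = 0.
Proof.
move=> s_full s_orth; apply: dotvv_eq0.
have /coord_span vE : v \in <<in_tuple s>>%VS by rewrite s_full memvf.
by rewrite {2}vE dotv_sumr big1 // => i _; rewrite s_orth ?mulr0 // mem_nth.
Qed.

Lemma continuous_dotvl x : continuous (fun w : 'rV[R]_d => dotv w x).
Proof.
rewrite /dotv => w; apply: (@continuous_big R _ +%R 0 xpredT add_continuous _ (index_enum 'I_d)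
   (fun i (w : 'rV[R]_d) => w ord0 i * x ord0 i)) => i _ w'.
by apply: continuousM; [exact: coord_continuous | exact: cst_continuous].
Qed.

Lemma closed_halfspace x : closed [set w : 'rV[R]_d | 0 <= dotv w x].
Proof.
rewrite -[X in closed X]/((fun w => dotv w x) @^-1` [set y | 0 <= y]).
by apply: preimage_closed; [move=> w _; exact: continuous_dotvl | exact: closed_ge].
Qed.

End DotProduct.

Lemma maximal_free_subseq {K : fieldType} {vT : vectType K} (A : set vT) :
  exists s : seq vT,
    [/\ free s, forall x, x \in s -> A x & forall x, A x -> x \in span s].
Proof.
pose freeA k := `[< exists s : seq vT,
  [/\ size s = k, free s & forall x, x \in s -> A x] >].
have freeA0 : exists k, freeA k.
  by exists 0%N; apply/asboolP; exists [::]; split => //; exact: nil_free.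
have freeA_dim k : freeA k -> (k <= \dim {:vT})%N.
  by move=> /asboolP[s [<- /eqP <- _]]; exact/dimvS/subvf.
case: (ex_maxnP freeA0 freeA_dim) => k /asboolP[s [sk s_free sA]] k_max.
exists s; split => // x Ax; apply/negPn/negP => x_notin.
have /k_max : freeA k.+1.
  apply/asboolP; exists (x :: s); rewrite /= sk free_cons x_notin s_free.
  by split => // y; rewrite in_cons => /predU1P[-> | /sA].
by rewrite ltnn.
Qed.

Lemma small_entries_small_coord {R : realFieldType} {d n : nat} (t : n.-tuple 'rV[R]_d) :
  exists2 eta : R, 0 < eta &
    forall y : 'rV[R]_d, (forall j, `|y ord0 j| <= eta) -> forall i, `|coord t i y| <= 1.
Proof.
pose L := \sum_(i < n) \sum_(j < d) `|coord t i (delta_mx 0 j)|.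
have L_ge0 : 0 <= L by rewrite sumr_ge0 // => i _; rewrite sumr_ge0.
exists (L + 1)^-1; first by rewrite invr_gt0; lra.
move=> y y_small i; rewrite (row_sum_delta y) linear_sum /=.
apply: le_trans (ler_norm_sum _ _ _) _.
apply: (@le_trans _ _ (L * (L + 1)^-1)); last by rewrite ler_pdivrMr ?mul1r; lra.
apply: (@le_trans _ _ ((\sum_(j < d) `|coord t i (delta_mx 0 j)|) * (L + 1)^-1)).
  rewrite mulr_suml; apply: ler_sum => j _; rewrite linearZ normrM mulrC.
  exact: ler_wpM2l.
apply: ler_wpM2r; first by rewrite invr_ge0; lra.
by rewrite /L (bigD1 i) //= lerDl sumr_ge0 // => ? _; rewrite sumr_ge0.
Qed.

Section UnionOfCones.
Variables (R : realType) (d : nat) (C : nat -> set 'rV[R]_d).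
Hypothesis C_incr : forall m, C m `<=` C m.+1.
Hypothesis C0 : forall m, C m 0.
Hypothesis C_addr : forall m x y, C m x -> C m y -> C m (x + y).
Hypothesis C_scaler : forall m (a : R) x, 0 <= a -> C m x -> C m (a *: x).
Hypothesis C_pointed : forall m x, C m x -> C m (- x) -> x = 0.
Hypothesis C_opp_approx : forall m x (eta : R), C m x -> 0 < eta ->
  exists m' z, C m' z /\ forall j, `|(z + x) ord0 j| <= eta.

Lemma cones_le {m n : nat} : (m <= n)%N -> C m `<=` C n.
Proof.
by move=> /subnK <-; elim: (n - m)%N => // k IH x /IH; rewrite addSn; apply: C_incr.
Qed.

Lemma cones_seq (s : seq 'rV[R]_d) : (forall x, x \in s -> exists m, C m x) ->
  exists m, forall x, x \in s -> C m x.
Proof.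
elim: s => [|a s IH] sC; first by exists 0%N.
have [m1 Ca] := sC a (mem_head _ _).
have [m2 Cs] := IH (fun x xs => sC x (predU1r _ _ xs)).
exists (maxn m1 m2) => x /predU1P[-> | /Cs]; first exact: cones_le (leq_maxl _ _) _ Ca.
exact: cones_le (leq_maxr _ _) _.
Qed.

Lemma cone_sum m n (c : 'I_n -> R) (t : 'I_n -> 'rV[R]_d) :
  (forall i, 0 <= c i) -> (forall i, C m (t i)) -> C m (\sum_i c i *: t i).
Proof.
move=> c_ge0 Ct; elim/big_ind: _ => [|x y|i _]; [exact: C0 | exact: C_addr |].
exact: C_scaler.
Qed.

Lemma cone_sum_interior m (s : seq 'rV[R]_d) y : (forall x, x \in s -> C m x) ->
  y \in span s -> (forall i, `|coord (in_tuple s) i y| <= 1) ->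
  C m (\sum_(i < size s) s`_i + y).
Proof.
move=> sC y_span y_coord; rewrite [in X in C m X](@coord_span _ _ _ (in_tuple s) y y_span).
rewrite -big_split /=.
under eq_bigr => i _ do rewrite -[X in X + _]scale1r -scalerDl.
apply: cone_sum => [i | i]; last exact/sC/mem_nth.
by have := y_coord i; rewrite ler_norml => /andP[? _]; lra.
Qed.

Lemma union_cones_trivial m v : C m v -> v = 0.
Proof.
move=> Cv.
have [s [_ sC C_span]] := maximal_free_subseq (\bigcup_k C k).
have [m1 Cs] : exists m1, forall x, x \in s -> C m1 x.
  by apply: cones_seq => x /sC[k _ Ckx]; exists k.
have [eta eta_gt0 coord_le1] := small_entries_small_coord (in_tuple s).
pose sig := \sum_(i < size s) s`_i.
have Csig : C m1 sig.
  rewrite -[sig]addr0; apply: cone_sum_interior => // [|i]; first exact: mem0v.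
  by rewrite linear0 normr0 ler01.
have Csig_v : C (maxn m1 m) (sig + v).
  apply: C_addr; first exact: cones_le (leq_maxl _ _) _ Csig.
  exact: cones_le (leq_maxr _ _) _ Cv.
have [m2 [z [Cz]]] := C_opp_approx Csig_v eta_gt0.
(* [y] is small and lies in [span s], so [sig - y] stays in [C m1]. *)
set y := z + (sig + v) => y_small.
have span_C k x : C k x -> x \in span s by move=> Ckx; apply: C_span; exists k.
have Csig_y : C m1 (sig - y).
  apply: cone_sum_interior => // [|i]; last by apply: coord_le1 => j; rewrite mxE normrN.
  by rewrite memvN !memvD //; [exact: span_C Cz | exact: span_C Csig | exact: span_C Cv].
pose M := maxn (maxn m1 m) m2.
apply: (@C_pointed M); first exact: cones_le (leq_trans (leq_maxr m1 m) (leq_maxl _ _)) _ Cv.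
have -> : - v = z + (sig - y) by apply/rowP => j; rewrite /y !mxE; ring.
apply: C_addr; first exact: cones_le (leq_maxr _ _) _ Cz.
exact: cones_le (leq_trans (leq_maxl m1 m) (leq_maxl _ _)) _ Csig_y.
Qed.

End UnionOfCones.

Lemma sigma_preimage (T U : Type) (D : set (set T)) (E : set (set U)) (f : U -> T) :
  (forall A, D A -> <<s E >> (f @^-1` A)) ->
  forall A, <<s D >> A -> <<s E >> (f @^-1` A).
Proof.
move=> DE A sA; rewrite -[f @^-1` A]setTI.
apply: (smallest_sub (sigma_algebra_image f (smallest_sigma_algebra setT E)) _ sA).
by move=> B /DE; rewrite /image_set_system /= setTI.
Qed.

Section Cylinder.
Variables (T : pointedType) (G : set T).
Let D := [set [set S : set T | S g] | g in G].

Lemma cylinder_subset_sigma (l : seq T) (X : set (set T)) :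
  (forall x, x \in l -> G x) ->
  (forall S S', {in l, forall x, S x <-> S' x} -> X S -> X S') ->
  measurable (X : set (g_sigma_algebraType D)).
Proof.
elim: l X => [|x l IH] X lG X_dep.
  have [[S XS] | noX] := pselect (exists S, X S).
    rewrite (_ : X = setT); first exact: measurableT.
    by apply/seteqP; split => // S' _; exact: X_dep XS.
  rewrite (_ : X = set0); first exact: measurable0.
  by apply/seteqP; split => // S XS; apply: noX; exists S.
have lG' y : y \in l -> G y by move=> yl; apply: lG; rewrite in_cons yl orbT.
have mx : measurable ([set S | S x] : set (g_sigma_algebraType D)).
  by apply: sub_sigma_algebra; exists x => //; apply: lG; exact: mem_head.
pose X1 := [set S : set T | X (x |` S)].
pose X0 := [set S : set T | X (S `\ x)].
have mX1 : measurable (X1 : set (g_sigma_algebraType D)).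
  apply: IH => // S S' SS'; apply: X_dep => y /predU1P[-> | yl].
    by split; left.
  by split => -[<- | /(SS' _ yl)]; by [left | right].
have mX0 : measurable (X0 : set (g_sigma_algebraType D)).
  apply: IH => // S S' SS'; apply: X_dep => y /predU1P[-> | yl].
    by split => -[_ /(_ erefl)].
  by split => -[/(SS' _ yl) ? ?]; split.
rewrite (_ : X = [set S | S x] `&` X1 `|` ~` [set S | S x] `&` X0).
  apply: (@measurableU _ (g_sigma_algebraType D)); apply: measurableI => //.
  exact: measurableC.
have add_x S : S x -> x |` S = S by move=> Sx; apply: setUidr => _ ->.
apply/seteqP; split => S.
  move=> XS; have [Sx | nSx] := pselect (S x); [left | right]; split => //=.
    by rewrite /X1 /= add_x.
  by rewrite /X0 /= not_setD1.
by case=> -[/= Sx]; rewrite /X1 /X0 /= ?add_x ?not_setD1.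
Qed.
End Cylinder.

Lemma compact_nested_closed {T : ptopologicalType} {A : set T} {F : nat -> set T} :
  compact A -> (forall k, closed (F k)) -> (forall k, F k.+1 `<=` F k) ->
  (forall k, exists2 w, A w & F k w) -> exists2 w, A w & forall k, F k w.
Proof.
move=> A_compact F_closed F_decr F_meet.
have F_le i k : (i <= k)%N -> F k `<=` F i.
  by move=> /subnK <-; elim: (k - i)%N => // n IH x; rewrite addSn => /F_decr /IH.
move: A_compact; rewrite compact_In0 => /(_ nat setT (fun k => A `&` F k)) [].
- by exists F => // k _.
- move=> K _; have [w Aw Fw] := F_meet (\max_(i <- finmap.enum_fset K) i).
  exists w => i /= iK; split => //; apply: F_le Fw.
  exact: (@leq_bigmax_seq _ (finmap.enum_fset K) xpredT id i).
- by move=> w AFw; exists w => [|k]; [case: (AFw 0%N I) | case: (AFw k I)].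
Qed.

Lemma countable_enum {T : pointedType} {A : set T} {x0 : T} : countable A -> A x0 ->
  exists g : nat -> T, (forall i, A (g i)) /\ (forall x, A x -> exists i, g i = x).
Proof.
move=> /pcard_surjP [g g_surj] Ax0.
exists (fun i => if pselect (A (g i)) is left _ then g i else x0); split.
  by move=> i; case: pselect.
by move=> x Ax; have [i _ gi] := g_surj x Ax; exists i; case: pselect; rewrite gi.
Qed.

Definition box {R : realType} {d : nat} (c : 'rV[R]_d) (r : R) : set 'rV[R]_d :=
  [set w | forall i, `[c ord0 i - r, c ord0 i + r]%classic (w ord0 i)].

(* Only the points of [G] are tested, so that [trapped G c r] is a
   [subset_sigma G]-event. *)
Definition trapped {R : realType} {d : nat} (G : set 'rV[R]_d) (c : 'rV[R]_d)
    (r : R) : set (set 'rV[R]_d) :=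
  [set S | exists2 w, box c r w & forall h, G h -> S h -> 0 <= dotv w h].

Section Trapped.
Variables (R : realType) (d : nat) (G : set 'rV[R]_d).
Implicit Types (c w : 'rV[R]_d) (r : R) (S : set 'rV[R]_d).

Lemma box_compact c r : compact (box c r).
Proof. exact: (rV_compact (fun i => @segment_compact R _ _)). Qed.

Lemma box_opp c r w : box c r w -> box (- c) r (- w).
Proof.
move=> cw i; have := cw i; rewrite /= !in_itv /= !mxE => /andP[? ?].
by apply/andP; split; lra.
Qed.

Lemma trapped_sub c r S S' : S' `<=` S -> trapped G c r S -> trapped G c r S'.
Proof. by move=> S'S [w cw Sw]; exists w => // h Gh /S'S; exact: Sw. Qed.

Lemma trapped_setNeg c r S : (forall h, G h -> G (- h)) ->
  trapped G c r (setNeg S) <-> trapped G (- c) r S.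
Proof.
have dotvNN w h : dotv (- w) (- h) = dotv w h.
  by rewrite dotvNl dotvC dotvNl opprK dotvC.
move=> G_opp; split => -[w cw Sw]; exists (- w); first exact: box_opp.
- by move=> h Gh Sh; rewrite -dotvNN opprK; apply: Sw; [exact: G_opp | exists h].
- by rewrite -[c]opprK; exact: box_opp.
- move=> _ /[swap] -[h Sh <-] Gh; rewrite dotvNN; apply: Sw Sh.
  by rewrite -[h]opprK; exact: G_opp.
Qed.

(* By compactness of the box, a normal valid on every finite part of [G] can be
   chosen valid on all of [G]. *)
Lemma trapped_bigcap c r {g : nat -> 'rV[R]_d} :
  (forall i, G (g i)) -> (forall h, G h -> exists i, g i = h) ->
  trapped G c r = \bigcap_k [set S | exists2 w, box c r w &
    forall i, (i < k)%N -> S (g i) -> 0 <= dotv w (g i)].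
Proof.
move=> gG g_onto; apply/seteqP; split => S.
  by move=> [w cw Sw] k _; exists w => // i _; apply: Sw.
move=> S_trapped_upto.
pose F k := [set w | forall i, (i < k)%N -> S (g i) -> 0 <= dotv w (g i)].
have F_closed k : closed (F k).
  rewrite (_ : F k = \bigcap_(i in [set i | (i < k)%N /\ S (g i)])
                       [set w | 0 <= dotv w (g i)]).
    by apply: closed_bigI => i _; exact: closed_halfspace.
  by apply/seteqP; split => w Fw i; [case; exact: Fw | move=> ik Sg; exact: Fw].
have [w cw Fw] := compact_nested_closed (@box_compact c r) F_closed
  (fun k w Fw i ik => Fw i (ltnW ik)) (fun k => S_trapped_upto k I).
exists w => // h Gh Sh; have [i gi] := g_onto h Gh.
by rewrite -gi; apply: (Fw i.+1) => //; rewrite gi.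
Qed.

Lemma trapped_subset_sigma c r : countable G -> G 0 -> subset_sigma G (trapped G c r).
Proof.
move=> G_countable G0; have [g [gG g_onto]] := countable_enum G_countable G0.
rewrite (trapped_bigcap c r gG g_onto).
apply: (@bigcapT_measurable _ (g_sigma_algebraType [set [set S | S g] | g in G])) => k.
apply: (@cylinder_subset_sigma _ G (map g (iota 0 k))).
  by move=> x /mapP[i _ ->].
move=> S S' SS' [w cw Sw]; exists w => // i ik S'g; apply: Sw => //.
by apply/(SS' (g i)) => //; apply/mapP; exists i => //; rewrite mem_iota.
Qed.

End Trapped.

Definition dual_cone {R : realType} {d : nat} (S : set 'rV[R]_d) : set 'rV[R]_d :=
  [set v | forall h, S h -> 0 <= dotv v h].

Lemma rational_box {R : realType} {d : nat} (x : 'rV[R]_d) {r : R} : 0 < r ->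
  exists q : 'rV[rat]_d, box (map_mx ratr q) r x.
Proof.
move=> r_gt0; have [q qx] := boolp.choice (fun j : 'I_d =>
  @rat_in_itvoo R (x ord0 j - r) (x ord0 j + r) ltac:(lra)).
exists (\row_j q j) => j; move: (qx j); rewrite /= !in_itv /= !mxE => /andP[? ?].
by apply/andP; split; lra.
Qed.

Section NoTrappingHalfspace.
Variables (R : realType) (d : nat) (G : set 'rV[R]_d) (S : nat -> set 'rV[R]_d).
Hypothesis S_decr : forall m, S m.+1 `<=` S m.
Hypothesis S_G : forall m, S m `<=` G.
Hypothesis S_span : forall m, spans_Rd (S m).
(* Rational boxes are countably many, so this can hold almost surely. *)
Hypothesis S_trapped_opp : forall (q : 'rV[rat]_d) (k m : nat),
  trapped G (map_mx ratr q) k.+1%:R^-1 (S m) ->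
  exists m', trapped G (- map_mx ratr q) k.+1%:R^-1 (S m').

Lemma dual_cone_opp_approx m x (eta : R) : dual_cone (S m) x -> 0 < eta ->
  exists m' z, dual_cone (S m') z /\ forall j, `|(z + x) ord0 j| <= eta.
Proof.
move=> Cx eta_gt0.
have [k k_small] : exists k, k.+1%:R^-1 < eta / 2.
  have [N _ N_small] := near_infty_natSinv_lt (PosNum (divr_gt0 eta_gt0 (ltr0Sn R 1))).
  by exists N; apply: (N_small N) => /=.
have rk_gt0 : 0 < k.+1%:R^-1 :> R by rewrite invr_gt0 ltr0Sn.
have [q qx] := rational_box x rk_gt0.
have [m' [z qz Cz]] : exists m', trapped G (- map_mx ratr q) k.+1%:R^-1 (S m').
  by apply: S_trapped_opp; exists x => // h _; exact: Cx.
exists m', z; split=> [h Sh | j]; first by apply: Cz => //; exact: S_G Sh.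
move: (qx j) (qz j); rewrite /= !in_itv /= !mxE => /andP[x_lo x_hi] /andP[z_lo z_hi].
(* [lra] does not treat the inverse of a [nat] cast as an atom. *)
move: k_small x_lo x_hi z_lo z_hi; move: (k.+1%:R^-1 : R) => r *.
by rewrite ler_norml; apply/andP; split; lra.
Qed.

Lemma no_trapping_halfspace m v : v != 0 -> ~ dual_cone (S m) v.
Proof.
move=> /eqP v_neq0 Cv; apply: v_neq0; move: Cv.
apply: (union_cones_trivial (C := dual_cone \o S)).
- by move=> k x Cx h /S_decr; exact: Cx.
- by move=> k h _; rewrite dotv0l.
- by move=> k x y Cx Cy h Sh; rewrite dotvDl addr_ge0 //; [exact: Cx | exact: Cy].
- by move=> k a x a_ge0 Cx h Sh; rewrite dotvZl mulr_ge0 //; exact: Cx.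
- move=> k x Cx Cnx; have [s [sS s_full]] := S_span k.
  apply: (full_span_orthogonal_eq0 s_full) => y /sS Sy.
  by apply/eqP; rewrite eq_le -oppr_ge0 -dotvNl (Cnx y Sy) (Cx y Sy).
- exact: dual_cone_opp_approx.
Qed.

End NoTrappingHalfspace.

Lemma ae_not_of_null d (T : measurableType d) (R : realType)
    (mu : {measure set T -> \bar R}) (A : set T) :
  measurable A -> mu A = 0%E -> {ae mu, forall x, ~ A x}.
Proof. by move=> mA muA0; exists A; split => // x /= /contrapT. Qed.

Lemma ae_of_prob1 d (T : measurableType d) (R : realType) (P : probability T R) (A : set T) :
  measurable A -> P A = 1%E -> {ae P, forall x, A x}.
Proof.
move=> mA PA1; exists (~` A); split => //; first exact: measurableC.
by rewrite probability_setC // PA1 -EFinB subrr.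
Qed.

Section TailEvents.
Variables (R : realType) (d : nat) (dO : measure_display) (Omega : measurableType dO).
Variables (P : probability Omega R) (G : set 'rV[R]_d) (H : nat -> Omega -> set 'rV[R]_d).
Hypothesis G_countable : countable G.
Hypothesis G_subgroup : is_subgroup G.
Hypothesis H_random : random_subsets G H.
Hypothesis H_decr : decreasing_subsets H.
Hypothesis H_liouville : liouville P G H.
Hypothesis H_sym : symmetric_seq P G H.

Let G0 : G 0. Proof. by case: G_subgroup. Qed.

Let G_opp h : G h -> G (- h).
Proof. by case: G_subgroup => _ GB Gh; rewrite -sub0r; exact: GB. Qed.

Let trapped_event c r : subset_sigma G (trapped G c r).
Proof. exact: trapped_subset_sigma. Qed.

Let trapped_at c r m := [set w | trapped G c r (H m w)].
Let eventually_trapped c r := \bigcup_m trapped_at c r m.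

Lemma future_sigma_preimage n m X : (n <= m)%N -> subset_sigma G X ->
  future_sigma G H n [set w | X (H m w)].
Proof.
move=> nm; apply: (@sigma_preimage _ _ _ _ (H m)) => _ [g Gg <-].
by apply: sub_sigma_algebra; exists m, g.
Qed.

Lemma future_sigma_measurable n A : future_sigma G H n A -> measurable A.
Proof.
apply: smallest_sub; first exact: sigma_algebra_measurable.
by move=> _ [m [g [_ [Gg ->]]]]; exact: H_random.
Qed.

Lemma trapped_at_measurable c r m : measurable (trapped_at c r m).
Proof.
by apply: (@future_sigma_measurable 0); apply: future_sigma_preimage.
Qed.

Lemma eventually_trapped_measurable c r : measurable (eventually_trapped c r).
Proof. by apply: bigcupT_measurable => m; exact: trapped_at_measurable. Qed.

Lemma trapped_at_le c r m m' : (m <= m')%N -> trapped_at c r m `<=` trapped_at c r m'.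
Proof.
move=> /subnK <-; elim: (m' - m)%N => // k IH w /IH; rewrite addSn.
by apply: trapped_sub; exact: H_decr.
Qed.

Lemma eventually_trapped_tail c r n : future_sigma G H n (eventually_trapped c r).
Proof.
rewrite (_ : eventually_trapped c r = \bigcup_k trapped_at c r (k + n)).
  by apply: sigma_algebra_bigcup => k; apply: future_sigma_preimage; first exact: leq_addl.
apply/seteqP; split => w [m _ tw]; last by exists (m + n)%N.
by exists m => //; apply: trapped_at_le tw; exact: leq_addr.
Qed.

Lemma P_trapped_at_opp c r m : P (trapped_at c r m) = P (trapped_at (- c) r m).
Proof.
rewrite [LHS](H_sym m (trapped_event c r)); congr (P _).
by apply/seteqP; split => w /(trapped_setNeg c r (H m w) G_opp).
Qed.

Lemma eventually_trapped_null_opp c r :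
  P (eventually_trapped c r) = 0%E -> P (eventually_trapped (- c) r) = 0%E.
Proof.
move=> E0; apply/negligibleP; first exact: eventually_trapped_measurable.
apply: negligible_bigcup => m; apply/negligibleP; first exact: trapped_at_measurable.
apply: eq_trans (esym (P_trapped_at_opp c r m)) _.
apply/eqP; rewrite -measure_le0 -E0 le_measure ?inE //.
- exact: trapped_at_measurable.
- exact: eventually_trapped_measurable.
- exact: bigcup_sup.
Qed.

Lemma ae_eventually_trapped_opp c r :
  {ae P, forall w, eventually_trapped c r w <-> eventually_trapped (- c) r w}.
Proof.
have [E0 | E1] := H_liouville (eventually_trapped_tail c r).
  have E0' := eventually_trapped_null_opp E0.
  apply: filterS2 (ae_not_of_null (eventually_trapped_measurable _ _) E0)
    (ae_not_of_null (eventually_trapped_measurable _ _) E0') => w ? ?; by split.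
have E1' : P (eventually_trapped (- c) r) = 1%E.
  have [E0' | //] := H_liouville (eventually_trapped_tail (- c) r).
  by move: (eventually_trapped_null_opp E0'); rewrite opprK E1 => /eqP; rewrite onee_eq0.
apply: filterS2 (ae_of_prob1 (eventually_trapped_measurable _ _) E1)
  (ae_of_prob1 (eventually_trapped_measurable _ _) E1') => w ? ?; by split.
Qed.

Lemma ae_rational_boxes_opp :
  {ae P, forall w (q : 'rV[rat]_d) (k : nat),
    eventually_trapped (map_mx ratr q) k.+1%:R^-1 w <->
    eventually_trapped (- map_mx ratr q) k.+1%:R^-1 w}.
Proof.
pose Q i w := if @unpickle ('rV[rat]_d * nat)%type i is Some (q, k) then
  eventually_trapped (map_mx ratr q) k.+1%:R^-1 w <->
  eventually_trapped (- map_mx ratr q) k.+1%:R^-1 w else True.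
have : {ae P, forall w i, Q i w}.
  apply: ae_foralln => i; rewrite /Q; case: unpickle => [[q k] | ]; last exact: aeW.
  exact: ae_eventually_trapped_opp.
by apply: filterS => w Qw q k; have := Qw (pickle (q, k)); rewrite /Q pickleK.
Qed.

End TailEvents.

Unset Implicit Arguments.

Theorem mainTheorem6 (R : realType) (d : nat) (dO : measure_display)
  (Omega : measurableType dO) (P : probability Omega R)
  (G : set 'rV[R]_d) (H : nat -> Omega -> set 'rV[R]_d) :
  countable G -> is_subgroup G ->
  random_subsets G H ->
  (forall n w, is_subsemigroup G (H n w)) ->
  decreasing_subsets H ->
  liouville P G H ->
  symmetric_seq P G H ->
  (forall n w, spans_Rd (H n w)) ->
  {ae P, forall w, forall n (v : 'rV[R]_d), v != 0 ->
     ~ (forall h, H n w h -> 0 <= dotv v h)}.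
Proof.
move=> G_countable G_subgroup H_random H_semigroup H_decr H_liouville H_sym H_span.
have := ae_rational_boxes_opp G_countable G_subgroup H_random H_decr H_liouville H_sym.
apply: filterS => w trapped_opp n v v_neq0.
apply: (@no_trapping_halfspace R d G (fun m => H m w)) v_neq0 => [m | m | m | q k m tm].
- exact: H_decr.
- by have [] := H_semigroup m w.
- exact: H_span.
- by have [m' _ tm'] := (trapped_opp q k).1 (ex_intro2 _ _ m I tm); exists m'.
Qed.
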